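(* Let $K$ be a field of characteristic $p>0$, $s\geq1$ an integer, $n=1+p^s$, let $X$ be the $n\times n$ matrix with $1$'s in positions $(i,i+1)$, $1\leq i\leq n-1$, and $0$ elsewhere, let $B=1+X$, and let $k$ be a positive integer. Then: (1) there exists a unique matrix $A\in\mathrm{U}_n(K)$ whose last column has only zero entries except at position $(n,n)$ such that $ABA^{-1}=B^{1+p^k}$; (2) if $p=2$, there exists a unique matrix $A\in\mathrm{U}_n(K)$ whose last column has only zero entries except at position $(n,n)$ such that $ABA^{-1}=B^{-(1+2^k)}$.
   Context: $\mathrm{U}_n(K)$ is the group of upper-triangular unipotent $n\times n$ matrices over $K$. *)

From HB Require Import structures.
From mathcomp Require Import all_boot all_order all_algebra.
Set Implicit Arguments. Unset Strict Implicit. Unset Printing Implicit Defensive.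
Import GRing.Theory.
Local Open Scope ring_scope.

(* Indices are 0-based: 'I_n = {0,...,n-1}; paper position (i,j) is (i-1,j-1). *)

Definition shiftX (K : fieldType) (n : nat) : 'M[K]_n :=
  \matrix_(i < n, j < n) (if j == i.+1 :> nat then 1 else 0).

Definition Bmat (K : fieldType) (n : nat) : 'M[K]_n := 1%:M + shiftX K n.

Definition unitriangular (K : fieldType) (n : nat) (A : 'M[K]_n) : Prop :=
  (forall i j : 'I_n, (j < i)%N -> A i j = 0) /\ (forall i : 'I_n, A i i = 1).

Definition lastcol_trivial (K : fieldType) (n : nat) (A : 'M[K]_n.+1) : Prop :=
  forall i : 'I_n.+1, i != ord_max -> A i ord_max = 0.

From HB Require Import structures.
From mathcomp Require Import all_boot all_order all_algebra.
From mathcomp Require Import zify.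
Import GRing.Theory.
Local Open Scope ring_scope.
Set Implicit Arguments. Unset Strict Implicit.

(* An invertible A satisfies A B A^-1 = T iff A X = (T - 1) A, i.e. column j of A is
   (T - 1) times column j + 1; with last column e_n this forces column j to be
   (T - 1)^(n-j) e_n. Conversely that matrix is unitriangular, hence a solution, as soon
   as T - 1 is strictly upper triangular with all superdiagonal entries equal to 1.
   For unitriangular matrices with constant superdiagonal, that constant adds under
   products and changes sign under inversion; so B^(1+p^k) and B^-(1+2^k) qualify,
   because 1 + p^k = 1 and, for p = 2, -(1 + 2^k) = 1 in K. *)

Section Bands.
Variable R : nzRingType.

Definition upper_band m n k (M : 'M[R]_(m, n)) :=
  forall (i : 'I_m) (j : 'I_n), (j < i + k)%N -> M i j = 0.

Definition const_diag m n k (M : 'M[R]_(m, n)) (d : R) :=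
  forall (i : 'I_m) (j : 'I_n), (j = i + k :> nat)%N -> M i j = d.

Lemma upper_bandW m n k k' (M : 'M[R]_(m, n)) :
  (k' <= k)%N -> upper_band k M -> upper_band k' M.
Proof. by move=> le_k M0 i j lt_j; apply: M0; lia. Qed.

Lemma upper_band_const_diag0 m n k (M : 'M[R]_(m, n)) :
  upper_band k.+1 M -> const_diag k M 0.
Proof. by move=> M0 i j ji; apply: M0; lia. Qed.

Lemma upper_bandN m n k (M : 'M[R]_(m, n)) :
  upper_band k M -> upper_band k (- M).
Proof. by move=> M0 i j lt_j; rewrite mxE M0 ?oppr0. Qed.

Lemma const_diagN m n k (M : 'M[R]_(m, n)) d :
  const_diag k M d -> const_diag k (- M) (- d).
Proof. by move=> Md i j ji; rewrite mxE Md. Qed.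

Lemma upper_bandD m n k (M N : 'M[R]_(m, n)) :
  upper_band k M -> upper_band k N -> upper_band k (M + N).
Proof. by move=> M0 N0 i j lt_j; rewrite mxE M0 ?N0 ?addr0. Qed.

Lemma const_diagD m n k (M N : 'M[R]_(m, n)) c d :
  const_diag k M c -> const_diag k N d -> const_diag k (M + N) (c + d).
Proof. by move=> Mc Nd i j ji; rewrite mxE Mc ?Nd. Qed.

Lemma upper_band_sum m n k I (r : seq I) (F : I -> 'M[R]_(m, n)) :
  (forall l, upper_band k (F l)) -> upper_band k (\sum_(l <- r) F l).
Proof. by move=> F0 i j lt_j; rewrite summxE big1 // => l _; apply: F0. Qed.

Lemma upper_band_mul m n p a b (P : 'M[R]_(m, n)) (Q : 'M[R]_(n, p)) :
  upper_band a P -> upper_band b Q -> upper_band (a + b) (P *m Q).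
Proof.
move=> P0 Q0 i j lt_j; rewrite mxE big1 // => l _.
have [lt_l | le_l] := ltnP l (i + a); first by rewrite P0 ?mul0r.
by rewrite Q0 ?mulr0 //; lia.
Qed.

(* Only the single term l = i + a survives in the product entry. *)
Lemma const_diag_mul n a b (P Q : 'M[R]_n) c d :
  upper_band a P -> const_diag a P c -> upper_band b Q -> const_diag b Q d ->
  const_diag (a + b) (P *m Q) (c * d).
Proof.
move=> P0 Pc Q0 Qd i j ji; have lt_ia : (i + a < n)%N by have := ltn_ord j; lia.
rewrite mxE (bigD1 (Ordinal lt_ia)) //= Pc ?Qd //=; last by lia.
rewrite big1 ?addr0 // => l /eqP ne_l.
have {}ne_l : (l : nat) <> (i + a)%N by move=> e; apply: ne_l; apply: val_inj.
have [lt_l | le_l] := ltnP l (i + a); first by rewrite P0 ?mul0r.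
by rewrite Q0 ?mulr0 //; lia.
Qed.

Lemma upper_band0_1 n : upper_band 0 (1 : 'M[R]_n.+1).
Proof. by move=> i j; rewrite addn0 mxE; case: eqP => // ->; rewrite ltnn. Qed.

Lemma const_diag0_1 n : const_diag 0 (1 : 'M[R]_n.+1) 1.
Proof. by move=> i j; rewrite addn0 mxE => ji; rewrite (val_inj ji) eqxx. Qed.

Lemma upper_bandX n a (N : 'M[R]_n.+1) m :
  upper_band a N -> upper_band (a * m) (N ^+ m).
Proof.
move=> N0; elim: m => [|m IH]; first by rewrite muln0 expr0; apply: upper_band0_1.
by rewrite exprSr -mulmxE mulnS addnC; apply: upper_band_mul.
Qed.

Lemma const_diagX n a (N : 'M[R]_n.+1) d m :
  upper_band a N -> const_diag a N d -> const_diag (a * m) (N ^+ m) (d ^+ m).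
Proof.
move=> N0 Nd; elim: m => [|m IH]; first by rewrite muln0 !expr0; apply: const_diag0_1.
rewrite !exprSr -mulmxE mulnS addnC.
by apply: const_diag_mul => //; apply: upper_bandX.
Qed.

Lemma upper_band_nilpotent n (N : 'M[R]_n.+1) : upper_band 1 N -> N ^+ n.+1 = 0.
Proof.
move=> N0; apply/matrixP => i j; rewrite mxE (upper_bandX (m := n.+1) N0) //.
by have := ltn_ord j; lia.
Qed.

(* The geometric series in the nilpotent matrix 1 - P inverts P. *)
Lemma mul_unitri_geometric n (P : 'M[R]_n.+1) :
  upper_band 1 (P - 1) -> P * \sum_(m < n.+1) (1 - P) ^+ m = 1.
Proof.
move=> P0; have := subrX1 (1 - P) n.+1.
rewrite upper_band_nilpotent; last by rewrite -opprB; apply: upper_bandN.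
by rewrite addrAC subrr add0r sub0r mulNr => /oppr_inj <-.
Qed.

Definition unitri_sdiag n (c : R) (P : 'M[R]_n.+1) :=
  upper_band 1 (P - 1) /\ const_diag 1 (P - 1) c.

Lemma unitri_sdiag1 n : unitri_sdiag 0 (1 : 'M[R]_n.+1).
Proof. by rewrite /unitri_sdiag subrr; split=> i j _; rewrite mxE. Qed.

Lemma unitri_sdiagM n c d (P Q : 'M[R]_n.+1) :
  unitri_sdiag c P -> unitri_sdiag d Q -> unitri_sdiag (c + d) (P * Q).
Proof.
move=> [P0 Pc] [Q0 Qd]; rewrite /unitri_sdiag.
have -> : P * Q - 1 = (P - 1) + (Q - 1) + (P - 1) * (Q - 1).
  rewrite -{1}(subrK 1 P) -{1}(subrK 1 Q).
  by rewrite mulrDl mulrDr !mul1r mulr1 addrA addrK [RHS]addrC !addrA.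
have PQ0 := upper_band_mul P0 Q0.
split; first by do 2?apply: upper_bandD => //; apply: upper_bandW _ PQ0.
by rewrite -[c + d]addr0; apply: const_diagD; [apply: const_diagD|apply: upper_band_const_diag0].
Qed.

Lemma unitri_sdiagX n c (P : 'M[R]_n.+1) m :
  unitri_sdiag c P -> unitri_sdiag (c *+ m) (P ^+ m).
Proof.
move=> Pc; elim: m => [|m IH]; first by rewrite expr0 mulr0n; apply: unitri_sdiag1.
by rewrite exprS mulrS; apply: unitri_sdiagM.
Qed.

End Bands.

Section Inverse.
Variable R : comUnitRingType.

Lemma unitri_unit n (P : 'M[R]_n.+1) : upper_band 1 (P - 1) -> P \is a GRing.unit.
Proof. by move/mul_unitri_geometric/mulmx1_unit => []. Qed.

Lemma unitri_inv n (P : 'M[R]_n.+1) :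
  upper_band 1 (P - 1) -> upper_band 1 (P^-1 - 1).
Proof.
move=> P0; have Pu := unitri_unit P0.
have -> : P^-1 = \sum_(m < n.+1) (1 - P) ^+ m.
  by rewrite -[RHS](mulKr Pu) mul_unitri_geometric // mulr1.
have N0 : upper_band 1 (1 - P) by rewrite -opprB; apply: upper_bandN.
rewrite big_ord_recl expr0 addrAC subrr add0r; apply: upper_band_sum => m.
by apply: upper_bandW _ (upper_bandX N0); rewrite mul1n.
Qed.

Lemma unitri_sdiagV n c (P : 'M[R]_n.+1) :
  unitri_sdiag c P -> unitri_sdiag (- c) P^-1.
Proof.
move=> [P0 Pc]; have Pu := unitri_unit P0; have Q0 := unitri_inv P0.
have N0 : upper_band 1 (1 - P) by rewrite -opprB; apply: upper_bandN.
split=> //.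
have -> : P^-1 - 1 = (1 - P) + (1 - P) * (P^-1 - 1).
  by rewrite mulrBr mulr1 [RHS]addrC subrK mulrBl mul1r mulrV.
rewrite -[- c]addr0; apply: const_diagD; first by rewrite -opprB; apply: const_diagN.
exact/upper_band_const_diag0/(upper_band_mul N0 Q0).
Qed.

End Inverse.

Section ShiftConjugation.
Variables (K : fieldType) (n : nat).
Local Notation X := (shiftX K n.+1).
Local Notation B := (Bmat K n.+1).

Lemma unitriangular_unit (A : 'M[K]_n.+1) : unitriangular A -> A \is a GRing.unit.
Proof.
move=> [A0 A1]; apply: unitri_unit => i j.
rewrite addn1 ltnS leq_eqVlt !mxE => /orP[/eqP/val_inj -> | lt_ji].
  by rewrite A1 eqxx subrr.
by rewrite A0 // -val_eqE /= gtn_eqF ?subr0.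
Qed.

Lemma Bmat_subr1 : B - 1 = X.
Proof. by rewrite /Bmat addrC addKr. Qed.

Lemma unitri_sdiag_Bmat : unitri_sdiag 1 B.
Proof.
rewrite /unitri_sdiag Bmat_subr1; split=> i j; rewrite mxE.
  by case: eqP => // ->; rewrite addn1 ltnn.
by move=> ->; rewrite addn1 eqxx.
Qed.

Lemma mulX_entry (M : 'M[K]_n.+1) i j :
  (M *m X) i j = if j == 0 :> nat then 0 else M i (inord j.-1).
Proof.
rewrite mxE; case: eqP => j0; first by rewrite big1 // => l _; rewrite mxE j0 mulr0.
rewrite (bigD1 (inord j.-1)) //= big1 ?addr0; last first.
  move=> l ne_l; rewrite mxE; case: eqP => e; last by rewrite mulr0.
  by case/eqP: ne_l; apply: val_inj; rewrite /= e /= inordK.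
rewrite mxE inordK; last exact: leq_ltn_trans (leq_pred _) (ltn_ord j).
by rewrite prednK ?lt0n ?eqxx ?mulr1 //; apply/eqP.
Qed.

Lemma conj_Bmat_eq (M T : 'M[K]_n.+1) : M \is a GRing.unit ->
  (M * B * M^-1 = T) <-> (M *m X = (T - 1) *m M).
Proof.
move=> Mu; have -> : (M * B * M^-1 = T) <-> (M * B = T * M).
  by split=> [<-|->]; rewrite ?divrK ?mulrK.
rewrite !mulmxE mulrBl mul1r /Bmat mulrDr mulr1 addrC.
by split=> [<-|->]; rewrite ?addrK ?subrK.
Qed.

Definition krylov_mx (Y : 'M[K]_n.+1) : 'M[K]_n.+1 :=
  \matrix_(i, j) (Y ^+ (n - j)) i ord_max.

Lemma krylov_mx_lastcol Y i : krylov_mx Y i ord_max = (i == ord_max)%:R.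
Proof. by rewrite !mxE subnn expr0 mxE. Qed.

Lemma mul_krylov_mx Y i j : (Y *m krylov_mx Y) i j = (Y ^+ (n - j).+1) i ord_max.
Proof. by rewrite exprS -mulmxE !mxE; apply: eq_bigr => l _; rewrite mxE. Qed.

Lemma krylov_mx_mulX Y : upper_band 1 Y -> krylov_mx Y *m X = Y *m krylov_mx Y.
Proof.
move=> Y0; apply/matrixP => i j; rewrite mulX_entry mul_krylov_mx.
case: eqP => [j0 | /eqP j_gt0]; first by rewrite (upper_bandX Y0) //= j0; lia.
rewrite mxE inordK; last exact: leq_ltn_trans (leq_pred _) (ltn_ord j).
by congr ((Y ^+ _) i ord_max); have := ltn_ord j; lia.
Qed.

Lemma krylov_mx_unitri Y :
  upper_band 1 Y -> const_diag 1 Y 1 -> unitriangular (krylov_mx Y).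
Proof.
move=> Y0 Y1; split=> [i j lt_ji | i]; rewrite mxE.
  by rewrite (upper_bandX Y0) //=; have := ltn_ord i; lia.
by rewrite (const_diagX Y0 Y1) ?expr1n //=; have := ltn_ord i; lia.
Qed.

(* Downward induction on the column: column j of M is Y times column j + 1. *)
Lemma eq_krylov_mx Y (M : 'M[K]_n.+1) :
  M *m X = Y *m M -> (forall i, M i ord_max = (i == ord_max)%:R) ->
  M = krylov_mx Y.
Proof.
move=> MX Mlast; apply/matrixP => i j; rewrite mxE.
suff : forall d (j i : 'I_n.+1), (n - j)%N = d -> M i j = (Y ^+ d) i ord_max by apply.
elim=> [|d IH] {}j {}i dj.
  have -> : j = ord_max by apply: val_inj; have := ltn_ord j; rewrite /=; lia.
  by rewrite Mlast expr0 mxE.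
have lt_j1 : (j.+1 < n.+1)%N by have := ltn_ord j; lia.
have := congr1 (fun N : 'M[K]_n.+1 => N i (Ordinal lt_j1)) MX.
rewrite mulX_entry /= inord_val => ->.
by rewrite exprS -mulmxE !mxE; apply: eq_bigr => l _; rewrite IH //=; lia.
Qed.

Lemma conj_Bmat_unique (T : 'M[K]_n.+1) : unitri_sdiag 1 T ->
  exists! A : 'M[K]_n.+1,
    [/\ unitriangular A, lastcol_trivial A & A * B * A^-1 = T].
Proof.
move=> [Y0 Y1]; have Kunitri := krylov_mx_unitri Y0 Y1.
exists (krylov_mx (T - 1)); split.
  split=> //; last exact/(conj_Bmat_eq _ (unitriangular_unit Kunitri))/krylov_mx_mulX.
  by move=> i /negbTE ne_i; rewrite krylov_mx_lastcol ne_i.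
move=> A [Aunitri Alast AT]; apply/esym/eq_krylov_mx.
  exact/(conj_Bmat_eq _ (unitriangular_unit Aunitri)).
by move=> i; case: eqP => [->|/eqP]; [apply: Aunitri.2 | apply: Alast].
Qed.

End ShiftConjugation.

Theorem lemma3p4 (K : fieldType) (p s k : nat)
  (hp : p \in [pchar K]) (hs : (1 <= s)%N) (hk : (0 < k)%N) :
  (exists! A : 'M[K]_((p ^ s).+1),
     [/\ unitriangular A, lastcol_trivial A &
         A * Bmat K (p ^ s).+1 * A^-1 = Bmat K (p ^ s).+1 ^+ (1 + p ^ k)]) /\
  (p = 2%N ->
   exists! A : 'M[K]_((p ^ s).+1),
     [/\ unitriangular A, lastcol_trivial A &
         A * Bmat K (p ^ s).+1 * A^-1 = Bmat K (p ^ s).+1 ^- (1 + 2 ^ k)]).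
Proof.
have exponent1 : (1 + p ^ k)%:R = 1 :> K.
  by rewrite natrD natrX (pcharf0 hp) expr0n eqn0Ngt hk addr0.
have Bpow : unitri_sdiag 1 (Bmat K (p ^ s).+1 ^+ (1 + p ^ k)).
  by rewrite -[X in unitri_sdiag X]exponent1; apply: unitri_sdiagX (unitri_sdiag_Bmat _ _).
split; first exact: conj_Bmat_unique.
move=> p2; apply: conj_Bmat_unique; subst p.
by rewrite -[X in unitri_sdiag X](oppr_pchar2 hp); apply: unitri_sdiagV.
Qed.
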